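(* Let $M$ be a $\pi$-projective right $R$-module. The following are equivalent: (a) $M$ is principally lifting; (b) $M$ is principally Goldie*-lifting; (c) $M$ is $\oplus$-principally supplemented.
   Context: $R$ is an associative ring with identity; modules are unital right $R$-modules. $M$ is $\pi$-projective if for all submodules $U,V$ with $U+V=M$ there exists $f\in\mathrm{End}(M)$ with $f(M)\subseteq U$ and $(1-f)(M)\subseteq V$. $K\ll N$ means $K$ is small in $N$. For submodules $X,Y$ of $M$, $X\,\beta^*\,Y$ means $(X+Y)/X\ll M/X$ and $(X+Y)/Y\ll M/Y$. $M$ is principally Goldie*-lifting if for every cyclic submodule $X$ there is a direct summand $D$ of $M$ with $X\,\beta^*\,D$. $M$ is principally lifting if for every cyclic submodule $X$ there is a decomposition $M=D\oplus D'$ with $D\subseteq X$ and $D'\cap X\ll M$. $M$ is $\oplus$-principally supplemented if for every cyclic submodule $X$ there is a direct summand $D$ of $M$ with $M=D+X$ and $D\cap X\ll D$. *)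

(* Right R-modules are modelled as left modules over the
   converse ring R^c: for m : M and r : R, the right action m r is r *: m
   (with r : R^c). *)
From HB Require Import structures.
From mathcomp Require Import all_boot all_order all_algebra.
Set Implicit Arguments. Unset Strict Implicit. Unset Printing Implicit Defensive.
Import GRing.Theory.
Local Open Scope ring_scope.

Section ModDefs.
Variable R : pzRingType.
Variable M : lmodType R^c.

Definition mset := M -> Prop.

Definition submod (U : mset) : Prop :=
  U 0 /\ (forall x y, U x -> U y -> U (x + y)) /\
  (forall (r : R^c) x, U x -> U (r *: x)).

Definition msub (U V : mset) : Prop := forall x, U x -> V x.
Definition mfull (U : mset) : Prop := forall x : M, U x.
Definition mtop : mset := fun _ => True.
Definition madd (U V : mset) : mset := fun x => exists u v, U u /\ V v /\ x = u + v.
Definition mcap (U V : mset) : mset := fun x => U x /\ V x.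

Definition cyclic_sub (m : M) : mset := fun x => exists r : R^c, x = r *: m.

Definition small (K N : mset) : Prop :=
  msub K N /\
  forall L, submod L -> msub L N -> msub N (madd K L) -> msub N L.

(* S/X << M/X, for submodules X <= S, via the correspondence theorem:
   submodules of M/X are L/X with X <= L <= M, and S/X + L/X = M/X iff S + L = M. *)
Definition small_mod (S X : mset) : Prop :=
  forall L, submod L -> msub X L -> mfull (madd S L) -> mfull L.

Definition beta_star (X Y : mset) : Prop :=
  small_mod (madd X Y) X /\ small_mod (madd X Y) Y.

Definition direct_decomp (D D' : mset) : Prop :=
  submod D /\ submod D' /\ mfull (madd D D') /\ (forall x, D x -> D' x -> x = 0).

Definition direct_summand (D : mset) : Prop := exists D', direct_decomp D D'.

Definition pi_projective : Prop :=
  forall U V : mset, submod U -> submod V -> mfull (madd U V) ->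
  exists f : {linear M -> M}, (forall x, U (f x)) /\ (forall x, V (x - f x)).

Definition principally_lifting : Prop :=
  forall m : M, exists D D', direct_decomp D D' /\ msub D (cyclic_sub m) /\
    small (mcap D' (cyclic_sub m)) mtop.

Definition principally_goldie_star_lifting : Prop :=
  forall m : M, exists D, direct_summand D /\ beta_star (cyclic_sub m) D.

Definition oplus_principally_supplemented : Prop :=
  forall m : M, exists D, direct_summand D /\ mfull (madd D (cyclic_sub m)) /\
    small (mcap D (cyclic_sub m)) D.

End ModDefs.

From mathcomp Require Import all_boot all_order all_algebra.
Set Implicit Arguments. Unset Strict Implicit. Unset Printing Implicit Defensive.
Import GRing.Theory.
Local Open Scope ring_scope.

(* (a) => (b) => (c) hold in every module and rest on the modular
   law: if M = D (+) D' and D <= X, then X = D + (X n D'). For (c) => (a),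
   pi-projectivity applied to M = D + X yields f in End(M) with f(M) <= X and
   (1 - f)(M) <= D; f then maps any complement of D onto a complement of D
   contained in X. *)

Section Submodules.
Variable R : pzRingType.
Variable M : lmodType R^c.
Implicit Types U V X D L : mset M.

Lemma submod0 U : submod U -> U 0.
Proof. by case. Qed.

Lemma submodD U x y : submod U -> U x -> U y -> U (x + y).
Proof. by move=> [_ [hD _]]; apply: hD. Qed.

Lemma submodZ U (r : R^c) x : submod U -> U x -> U (r *: x).
Proof. by move=> [_ [_ hZ]]; apply: hZ. Qed.

Lemma submodB U x y : submod U -> U x -> U y -> U (x - y).
Proof.
by move=> hU Ux Uy; apply: submodD => //; rewrite -scaleN1r; apply: submodZ.
Qed.

Lemma submod_cyclic (m : M) : submod (cyclic_sub m).
Proof.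
split; first by exists 0; rewrite scale0r.
split; first by move=> _ _ [r ->] [s ->]; exists (r + s); rewrite scalerDl.
by move=> r _ [s ->]; exists (r * s); rewrite scalerA.
Qed.

Lemma submod_madd U V : submod U -> submod V -> submod (madd U V).
Proof.
move=> hU hV; split; first by exists 0, 0; rewrite addr0; do !split; apply: submod0.
split.
  move=> _ _ [u [v [Uu [Vv ->]]]] [u' [v' [Uu' [Vv' ->]]]].
  by exists (u + u'), (v + v'); rewrite addrACA; do !split; apply: submodD.
move=> r _ [u [v [Uu [Vv ->]]]].
by exists (r *: u), (r *: v); rewrite scalerDr; do !split; apply: submodZ.
Qed.

Lemma submod_mcap U V : submod U -> submod V -> submod (mcap U V).
Proof.
move=> hU hV; split; first by split; apply: submod0.
split; first by move=> x y [? ?] [? ?]; split; apply: submodD.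
by move=> r x [? ?]; split; apply: submodZ.
Qed.

Lemma maddl U V u : submod V -> U u -> madd U V u.
Proof. by move=> hV Uu; exists u, 0; rewrite addr0; split => //; split => //; apply: submod0. Qed.

Lemma maddr U V v : submod U -> V v -> madd U V v.
Proof. by move=> hU Vv; exists 0, v; rewrite add0r; split => //; apply: submod0. Qed.

Lemma maddC U V x : madd U V x -> madd V U x.
Proof. by move=> [u [v [Uu [Vv ->]]]]; exists v, u; rewrite addrC. Qed.

Lemma direct_decompC D D' : direct_decomp D D' -> direct_decomp D' D.
Proof.
move=> [hD [hD' [cov cap0]]]; do !split => //; last by move=> x ? ?; apply: cap0.
by move=> x; apply: maddC.
Qed.

Lemma small_mtop K D : submod D -> small K D -> small K (@mtop _ M).
Proof.
move=> hD [KD smallKD]; split => // L hL _ cov x _.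
have DL : msub D L.
  move=> d Dd; suff [] : mcap D L d by [].
  apply: (smallKD (mcap D L)) => //; first exact: submod_mcap.
    by move=> y [].
  move=> y Dy; have [k [l [Kk [Ll ey]]]] := cov y I.
  exists k, l; do !split => //.
  have -> : l = y - k by rewrite ey addrC addKr.
  exact: submodB hD Dy (KD _ Kk).
have [k [l [Kk [Ll ->]]]] := cov x I.
exact: submodD (DL _ (KD _ Kk)) Ll.
Qed.

Lemma madd_mcap_summand D D' X a : direct_decomp D D' -> submod X ->
  msub D X -> X a -> madd D (mcap D' X) a.
Proof.
move=> [_ [_ [cov _]]] hX DX Xa; have [d [d' [Dd [D'd' ea]]]] := cov a.
exists d, d'; do !split => //.
have -> : d' = a - d by rewrite ea addrC addKr.
exact: submodB hX Xa (DX _ Dd).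
Qed.

Lemma lifting_beta_star D D' X : direct_decomp D D' -> submod X ->
  msub D X -> small (mcap D' X) (@mtop _ M) -> beta_star X D.
Proof.
move=> dD hX DX [_ smallXD']; have [hD _] := dD; split.
  move=> L hL XL cov x; have [_ [l [[a [d [Xa [Dd ->]]]] [Ll ->]]]] := cov x.
  by apply: submodD hL _ Ll; apply: XL; apply: submodD hX Xa (DX _ Dd).
move=> L hL DL cov; suff allL : msub (@mtop _ M) L by move=> x; apply: allL.
apply: (smallXD' L hL) => // x _.
have [_ [l [[a [d [Xa [Dd ->]]]] [Ll ->]]]] := cov x.
have [d1 [k [Dd1 [D'Xk ->]]]] := madd_mcap_summand dD hX DX Xa.
exists k, (d1 + d + l); split => //; split.
  by apply: submodD hL _ Ll; apply: DL; apply: submodD hD Dd1 Dd.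
by rewrite [d1 + k]addrC -!addrA.
Qed.

Lemma beta_star_supplement D D' X : direct_decomp D D' -> submod X ->
  beta_star X D -> mfull (madd D' X) /\ small (mcap D' X) D'.
Proof.
move=> [hD [hD' [cov cap0]]] hX [smallX smallD].
have covXD' : mfull (madd X D').
  apply: smallX; first exact: submod_madd.
    by move=> a Xa; apply: maddl.
  move=> x; have [d [d' [Dd [D'd' ->]]]] := cov x.
  by exists d, d'; split; [apply: maddr | split => //; apply: maddr].
split; first by move=> x; apply: maddC.
split; first by move=> x [].
move=> L hL LD' covD'.
have covDL : mfull (madd D L).
  apply: smallD; first exact: submod_madd.
    by move=> d Dd; apply: maddl.
  move=> x; have [a [d' [Xa [D'd' ->]]]] := covXD' x.
  have [k [l [[D'k Xk] [Ll ->]]]] := covD' d' D'd'.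
  exists (a + k), l; split; first by apply: maddl => //; apply: submodD.
  by split; [apply: maddr | rewrite addrA].
move=> x D'x; have [d [l [Dd [Ll ex]]]] := covDL x.
suff d0 : d = 0 by rewrite ex d0 add0r.
apply: cap0 => //; have -> : d = x - l by rewrite ex addrK.
exact: submodB hD' D'x (LD' _ Ll).
Qed.

Definition mimage (f : M -> M) U : mset M := fun y => exists2 z, U z & y = f z.

Lemma submod_mimage (f : {linear M -> M}) U : submod U -> submod (mimage f U).
Proof.
move=> hU; split; first by exists 0; rewrite ?linear0 //; apply: submod0.
split; first by move=> _ _ [z Uz ->] [z' Uz' ->]; exists (z + z'); rewrite ?linearD //; apply: submodD.
by move=> r _ [z Uz ->]; exists (r *: z); rewrite ?linearZ //; apply: submodZ.
Qed.

Lemma direct_decomp_mimage (f : {linear M -> M}) D D' X :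
  (forall x, X (f x)) -> (forall x, D (x - f x)) -> direct_decomp D D' ->
  direct_decomp (mimage f D') D /\ msub (mimage f D') X.
Proof.
move=> fX fD [hD [hD' [cov cap0]]].
split; last by move=> _ [z _ ->].
split; first exact: submod_mimage.
split => //; split.
  move=> x; have [d [z [Dd [D'z ->]]]] := cov x.
  exists (f z), (d + (z - f z)); split; first by exists z.
  by split; [apply: submodD hD Dd (fD z) | rewrite addrCA subrKC].
move=> _ [z D'z ->] Dfz.
suff -> : z = 0 by rewrite linear0.
apply: cap0 => //; rewrite -(subrK (f z) z).
exact: submodD hD (fD z) Dfz.
Qed.

Lemma pi_projective_lifting D D' X : pi_projective M -> direct_decomp D D' ->
  submod X -> mfull (madd D X) -> small (mcap D X) D ->
  exists D1, direct_decomp D1 D /\ msub D1 X /\ small (mcap D X) (@mtop _ M).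
Proof.
move=> piM dD hX covDX smallDX; have [hD _] := dD.
have [f [fX fD]] := piM X D hX hD (fun x => maddC (covDX x)).
have [dD1 D1X] := direct_decomp_mimage fX fD dD.
by exists (mimage f D'); split; [|split; [|apply: small_mtop smallDX]].
Qed.

End Submodules.

Theorem proposition3p16 (R : pzRingType) (M : lmodType R^c) :
  pi_projective M ->
  (principally_lifting M <-> principally_goldie_star_lifting M) /\
  (principally_goldie_star_lifting M <-> oplus_principally_supplemented M).
Proof.
move=> piM.
have ab : principally_lifting M -> principally_goldie_star_lifting M.
  move=> PL m; have [D [D' [dD [DmR smallmR]]]] := PL m.
  exists D; split; first by exists D'.
  exact: lifting_beta_star dD (submod_cyclic m) DmR smallmR.
have bc : principally_goldie_star_lifting M -> oplus_principally_supplemented M.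
  move=> PG m; have [D [[D' dD] bs]] := PG m.
  exists D'; split; first by exists D; apply: direct_decompC.
  exact: beta_star_supplement dD (submod_cyclic m) bs.
have ca : oplus_principally_supplemented M -> principally_lifting M.
  move=> PS m; have [D [[D' dD] [covDmR smallmR]]] := PS m.
  have [D1 [dD1 [D1mR smallT]]] :=
    pi_projective_lifting piM dD (submod_cyclic m) covDmR smallmR.
  by exists D1, D.
by split; split=> h; [apply: ab | apply: ca (bc h) | apply: bc | apply: ab (ca h)].
Qed.
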